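(* Let $\triangle ABC$ be a nondegenerate triangle circumscribed about a central conic such that either the center of the conic or one of its foci coincides with the circumcenter of $\triangle ABC$. Then $\triangle ABC$ has no right angle.
   Context: A central conic is a non-degenerate ellipse or hyperbola. A triangle is circumscribed about a conic if each of its three sidelines is tangent to the conic. *)

From HB Require Import structures.
From mathcomp Require Import all_boot all_order all_algebra.
From mathcomp Require Import reals.
Set Implicit Arguments. Unset Strict Implicit. Unset Printing Implicit Defensive.
Import Order.TTheory GRing.Theory Num.Theory.
Local Open Scope ring_scope.

Section Plane.
Variable R : realType.
Definition pt := (R * R)%type.

Definition psub (P Q : pt) : pt := (P.1 - Q.1, P.2 - Q.2).
Definition padd (P Q : pt) : pt := (P.1 + Q.1, P.2 + Q.2).
Definition pscale (k : R) (P : pt) : pt := (k * P.1, k * P.2).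
Definition dot (P Q : pt) : R := P.1 * Q.1 + P.2 * Q.2.
Definition cross (P Q : pt) : R := P.1 * Q.2 - P.2 * Q.1.
Definition perp (u : pt) : pt := (- u.2, u.1).
Definition dist2 (P Q : pt) : R := dot (psub P Q) (psub P Q).

Definition tri_nondegenerate (A B C : pt) : Prop := cross (psub B A) (psub C A) != 0.

Definition is_circumcenter (O A B C : pt) : Prop :=
  dist2 O A = dist2 O B /\ dist2 O B = dist2 O C.

(* A central conic is given by a center c, a unit axis direction u,
   semi-axes a, b > 0, and a flag hyp (false = ellipse, true = hyperbola). *)
Definition central_conic (c u : pt) (a b : R) (hyp : bool) : Prop :=
  dot u u = 1 /\ 0 < a /\ 0 < b.

Definition csign (hyp : bool) : R := if hyp then -1 else 1.

Definition on_conic (c u : pt) (a b : R) (hyp : bool) (X : pt) : Prop :=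
  let x := dot (psub X c) u in
  let y := dot (psub X c) (perp u) in
  x ^+ 2 / a ^+ 2 + csign hyp * (y ^+ 2 / b ^+ 2) = 1.

(* The line through P with direction d is the tangent line to the conic at
   the conic point P: d is orthogonal to the gradient of the equation at P. *)
Definition tangent_at (c u : pt) (a b : R) (hyp : bool) (P d : pt) : Prop :=
  on_conic c u a b hyp P /\
  (dot (psub P c) u) * (dot d u) / a ^+ 2
    + csign hyp * ((dot (psub P c) (perp u)) * (dot d (perp u)) / b ^+ 2) = 0.

Definition line_tangent (c u : pt) (a b : R) (hyp : bool) (P Q : pt) : Prop :=
  exists t : R, tangent_at c u a b hyp (padd P (pscale t (psub Q P))) (psub Q P).

Definition is_focus (c u : pt) (a b : R) (hyp : bool) (F : pt) : Prop :=
  if hyp then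
    F = padd c (pscale (Num.sqrt (a ^+ 2 + b ^+ 2)) u) \/
    F = padd c (pscale (- Num.sqrt (a ^+ 2 + b ^+ 2)) u)
  else if b <= a then
    F = padd c (pscale (Num.sqrt (a ^+ 2 - b ^+ 2)) u) \/
    F = padd c (pscale (- Num.sqrt (a ^+ 2 - b ^+ 2)) u)
  else
    F = padd c (pscale (Num.sqrt (b ^+ 2 - a ^+ 2)) (perp u)) \/
    F = padd c (pscale (- Num.sqrt (b ^+ 2 - a ^+ 2)) (perp u)).

Definition has_right_angle (A B C : pt) : Prop :=
  dot (psub B A) (psub C A) = 0 \/
  dot (psub A B) (psub C B) = 0 \/
  dot (psub A C) (psub B C) = 0.
End Plane.

From HB Require Import structures.
From mathcomp Require Import all_boot all_order all_algebra.
From mathcomp Require Import reals ring lra.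
Import Order.TTheory GRing.Theory Num.Theory.
Local Open Scope ring_scope.

(* If the angle at C is right, the circumcenter is the midpoint of AB, so it
   lies on the sideline AB, a tangent of the conic.  But no tangent passes
   through the center or a focus.  In axis coordinates the conic is
   x^2/a^2 + s y^2/b^2 = 1 (s = +-1), and the tangent at P = (p, q) lies on its
   polar line p x/a^2 + s q y/b^2 = 1, which misses the center (0, 0).  A focus
   (k, 0) with k^2 = a^2 - s b^2 on it would force p k = a^2, hence
   p^2 (a^2 - s b^2) = a^4, which is incompatible with p^2/a^2 = 1 - s q^2/b^2;
   the foci of an ellipse on its minor axis are handled by swapping the axes. *)

Section Plane.
Context {R : realType}.
Implicit Types (A B C O P Q c d u v w : pt R) (a b k l : R).

Lemma dotC P Q : dot P Q = dot Q P.
Proof. by rewrite /dot mulrC [P.2 * _]mulrC. Qed.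

Lemma dot_perp v : dot v (perp v) = 0.
Proof. by rewrite /dot /=; ring. Qed.

Lemma dot_perpl v : dot (perp v) v = 0.
Proof. by rewrite /dot /=; ring. Qed.

Lemma dot_perp2 v w : dot (perp v) (perp w) = dot v w.
Proof. by rewrite /dot /=; ring. Qed.

Lemma dot_psubxx c w : dot (psub c c) w = 0.
Proof. by rewrite /dot /= !subrr !mul0r addr0. Qed.

Lemma dot_psub_padd_scale P c d v l :
  dot (psub (padd P (pscale l d)) c) v = dot (psub P c) v + l * dot d v.
Proof. by case: P c d v => [? ?] [? ?] [? ?] [? ?]; rewrite /dot /=; ring. Qed.

Lemma csign_sqr (hyp : bool) : csign R hyp ^+ 2 = 1.
Proof. by case: hyp; rewrite /csign ?sqrrN expr1n. Qed.

Lemma pole_on_focal_axis {s p q k a b : R} : s ^+ 2 = 1 -> 0 < a -> 0 < b ->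
  p ^+ 2 / a ^+ 2 + s * (q ^+ 2 / b ^+ 2) = 1 -> p * k / a ^+ 2 = 1 ->
  k ^+ 2 = a ^+ 2 - s * b ^+ 2 -> False.
Proof.
move=> s2 a0 b0 onP pole k2.
have [a2 b2] : 0 < a ^+ 2 /\ 0 < b ^+ 2 by rewrite !exprn_gt0.
set t := q ^+ 2 / b ^+ 2 in onP.
have t0 : 0 <= t by rewrite divr_ge0 ?sqr_ge0 ?ltW.
have p2 : p ^+ 2 = a ^+ 2 * (1 - s * t) by rewrite -onP; field; rewrite gt_eqF.
have pk : p * k = a ^+ 2 by rewrite -[RHS]mul1r -pole; field; rewrite gt_eqF.
have a2E : a ^+ 2 = (1 - s * t) * (a ^+ 2 - s * b ^+ 2).
  apply: (mulfI (lt0r_neq0 a2)).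
  transitivity ((p * k) ^+ 2); first by rewrite pk; ring.
  by rewrite exprMn p2 k2; ring.
move/eqP: s2 k2 a2E; rewrite sqrf_eq1 => /orP[]/eqP-> k2 a2E.
- have ba : 0 <= a ^+ 2 - b ^+ 2 by rewrite -[b ^+ 2]mul1r -k2 sqr_ge0.
  have : 0 <= t * (a ^+ 2 - b ^+ 2) by rewrite mulr_ge0.
  lra.
- have : 0 <= t * (a ^+ 2 + b ^+ 2) by rewrite mulr_ge0 // addr_ge0 // ltW.
  lra.
Qed.

Section CentralConic.
Context {c u : pt R} {a b : R} {hyp : bool}.

Definition polar_form P X : R :=
  dot (psub P c) u * dot (psub X c) u / a ^+ 2
  + csign R hyp * (dot (psub P c) (perp u) * dot (psub X c) (perp u) / b ^+ 2).

Lemma polar_form_tangent_line P d l :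
  tangent_at c u a b hyp P d -> polar_form P (padd P (pscale l d)) = 1.
Proof.
rewrite /tangent_at /on_conic /polar_form !dot_psub_padd_scale => -[onP tanP].
by rewrite -[RHS]addr0 -onP -(mulr0 l) -tanP; ring.
Qed.

Lemma polar_form_center P : polar_form P c = 0.
Proof. by rewrite /polar_form !dot_psubxx !(mulr0, mul0r, addr0). Qed.

Hypothesis conic : central_conic c u a b hyp.

Lemma focusP F : is_focus c u a b hyp F ->
  (exists2 k, F = padd c (pscale k u) & k ^+ 2 = a ^+ 2 - csign R hyp * b ^+ 2) \/
  [/\ hyp = false & exists2 k, F = padd c (pscale k (perp u)) & k ^+ 2 = b ^+ 2 - a ^+ 2].
Proof.
have [_ [a0 b0]] := conic.
rewrite /is_focus /csign; case: hyp => [|]; last case: leP => [ba|ab].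
- have x0 : 0 <= a ^+ 2 + b ^+ 2 by rewrite addr_ge0 ?sqr_ge0.
  by case=> ->; left; eexists => //; rewrite ?sqrrN sqr_sqrtr // mulN1r opprK.
- have x0 : 0 <= a ^+ 2 - b ^+ 2 by rewrite subr_ge0 lerXn2r // ?nnegrE ltW.
  by case=> ->; left; eexists => //; rewrite ?sqrrN sqr_sqrtr // mul1r.
- have x0 : 0 <= b ^+ 2 - a ^+ 2 by rewrite subr_ge0 lerXn2r // ?nnegrE ltW.
  by case=> ->; right; split => //; eexists => //; rewrite ?sqrrN sqr_sqrtr.
Qed.

Lemma polar_form_major_axis P k :
  polar_form P (padd c (pscale k u)) = dot (psub P c) u * k / a ^+ 2.
Proof.
have [uu _] := conic.
by rewrite /polar_form !dot_psub_padd_scale !dot_psubxx dot_perp uu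
  !(add0r, mulr1, mulr0, mul0r, addr0).
Qed.

Lemma polar_form_minor_axis P k :
  polar_form P (padd c (pscale k (perp u))) =
  csign R hyp * (dot (psub P c) (perp u) * k / b ^+ 2).
Proof.
have [uu _] := conic.
by rewrite /polar_form !dot_psub_padd_scale !dot_psubxx dot_perpl dot_perp2 uu
  !(add0r, mulr1, mulr0, mul0r).
Qed.

Lemma polar_form_focus_neq1 {P F} :
  on_conic c u a b hyp P -> is_focus c u a b hyp F -> polar_form P F != 1.
Proof.
have [_ [a0 b0]] := conic.
rewrite /on_conic => onP /focusP[[k -> k2] | [hyp0 [k -> k2]]]; apply/eqP.
  by rewrite polar_form_major_axis => /(pole_on_focal_axis (csign_sqr hyp) a0 b0 onP)/(_ k2).
rewrite polar_form_minor_axis hyp0 /csign mul1r => pole.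
apply: (pole_on_focal_axis (s := 1) (q := dot (psub P c) u) (expr1n _ _) b0 a0 _ pole).
  by move: onP; rewrite hyp0 /csign !mul1r addrC.
by rewrite mul1r.
Qed.

Lemma tangent_line_avoids_center_foci {P d} l :
  tangent_at c u a b hyp P d ->
  ~ (padd P (pscale l d) = c \/ is_focus c u a b hyp (padd P (pscale l d))).
Proof.
move=> tanP.
have pole : polar_form P (padd P (pscale l d)) = 1 by apply: polar_form_tangent_line.
case=> [eX | /(polar_form_focus_neq1 tanP.1)]; last by rewrite pole eqxx.
by move: pole; rewrite eX polar_form_center => /eqP; rewrite eq_sym oner_eq0.
Qed.

Lemma line_tangent_avoids_center_foci {P Q} l :
  line_tangent c u a b hyp P Q ->
  ~ (padd P (pscale l (psub Q P)) = c \/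
     is_focus c u a b hyp (padd P (pscale l (psub Q P)))).
Proof.
case=> t /(tangent_line_avoids_center_foci (l - t)).
suff -> : padd (padd P (pscale t (psub Q P))) (pscale (l - t) (psub Q P)) =
          padd P (pscale l (psub Q P)) by [].
by case: P Q => [? ?] [? ?]; rewrite /padd /pscale /=; congr pair; ring.
Qed.

End CentralConic.

Lemma orthogonal_to_independent {w v1 v2} :
  cross v1 v2 != 0 -> dot w v1 = 0 -> dot w v2 = 0 -> w = (0, 0).
Proof.
case: w v1 v2 => [w1 w2] [x1 x2] [y1 y2]; rewrite /cross /dot /= => nd e1 e2.
have E1 : w1 * (x1 * y2 - x2 * y1) =
    y2 * (w1 * x1 + w2 * x2) - x2 * (w1 * y1 + w2 * y2) by ring.
have E2 : w2 * (x1 * y2 - x2 * y1) =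
    x1 * (w1 * y1 + w2 * y2) - y1 * (w1 * x1 + w2 * x2) by ring.
rewrite e1 e2 !mulr0 subrr in E1 E2.
move/eqP: E1 E2; rewrite mulf_eq0 (negbTE nd) orbF => /eqP-> /eqP.
by rewrite mulf_eq0 (negbTE nd) orbF => /eqP->.
Qed.

Lemma equidistant_orthogonal {O1 O2 X Y} :
  dist2 O1 X = dist2 O1 Y -> dist2 O2 X = dist2 O2 Y ->
  dot (psub O1 O2) (psub Y X) = 0.
Proof.
have two : (2 : R) != 0 by rewrite pnatr_eq0.
move=> e1 e2; apply: (mulfI two); rewrite mulr0.
transitivity ((dist2 O1 X - dist2 O1 Y) - (dist2 O2 X - dist2 O2 Y)).
  by case: O1 O2 X Y {e1 e2} => [? ?] [? ?] [? ?] [? ?]; rewrite /dist2 /dot /=; ring.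
by rewrite e1 e2 !subrr.
Qed.

Lemma circumcenter_unique {A B C O1 O2} : tri_nondegenerate A B C ->
  is_circumcenter O1 A B C -> is_circumcenter O2 A B C -> O1 = O2.
Proof.
move=> nd [eAB1 eBC1] [eAB2 eBC2].
have := orthogonal_to_independent nd (equidistant_orthogonal eAB1 eAB2)
  (equidistant_orthogonal (etrans eAB1 eBC1) (etrans eAB2 eBC2)).
by case: O1 O2 {eAB1 eBC1 eAB2 eBC2} => [? ?] [? ?] [/subr0_eq-> /subr0_eq->].
Qed.

Lemma right_angle_circumcenter A B C : dot (psub A C) (psub B C) = 0 ->
  is_circumcenter (padd A (pscale (1 / 2) (psub B A))) A B C.
Proof.
case: A B C => [a1 a2] [b1 b2] [c1 c2]; rewrite /is_circumcenter /dist2 /dot /= => rC.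
split; first by field.
(* the difference of the two sides is - dot (A - C) (B - C) *)
by rewrite -[LHS]subr0 -{1}oppr0 -rC; field.
Qed.

Lemma tri_nondegenerate_rot {A B C} :
  tri_nondegenerate A B C -> tri_nondegenerate B C A.
Proof.
rewrite /tri_nondegenerate; congr (_ != 0).
by case: A B C => [? ?] [? ?] [? ?]; rewrite /cross /=; ring.
Qed.

Lemma is_circumcenter_rot {O A B C} :
  is_circumcenter O A B C -> is_circumcenter O B C A.
Proof. by case=> eAB eBC; split; rewrite // -eBC. Qed.

Lemma circumscribed_no_right_angle_at3 {A B C O c u a b hyp} :
  tri_nondegenerate A B C -> central_conic c u a b hyp ->
  line_tangent c u a b hyp A B -> is_circumcenter O A B C ->
  (O = c \/ is_focus c u a b hyp O) -> dot (psub A C) (psub B C) <> 0.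
Proof.
move=> nd conic tAB cO hO /right_angle_circumcenter cM.
apply: (line_tangent_avoids_center_foci conic (1 / 2) tAB).
by rewrite -(circumcenter_unique nd cO cM).
Qed.

End Plane.

Theorem proposition2p2 (R : realType) (A B C O c u : pt R) (a b : R) (hyp : bool) :
  tri_nondegenerate A B C ->
  central_conic c u a b hyp ->
  line_tangent c u a b hyp A B ->
  line_tangent c u a b hyp B C ->
  line_tangent c u a b hyp C A ->
  is_circumcenter O A B C ->
  (O = c \/ is_focus c u a b hyp O) ->
  ~ has_right_angle A B C.
Proof.
move=> nd conic tAB tBC tCA cO hO.
have nd1 := tri_nondegenerate_rot nd; have nd2 := tri_nondegenerate_rot nd1.
have cO1 := is_circumcenter_rot cO; have cO2 := is_circumcenter_rot cO1.
case=> [rA | [rB | rC]].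
- exact: (circumscribed_no_right_angle_at3 nd1 conic tBC cO1 hO).
- by apply: (circumscribed_no_right_angle_at3 nd2 conic tCA cO2 hO); rewrite dotC.
- exact: (circumscribed_no_right_angle_at3 nd conic tAB cO hO).
Qed.
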